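(* Let $n>5$ with $n\equiv 1\pmod 4$ and put $m=n-1$. Over all even $r\in[2,n-3]$, $E(D_n^s[\boldsymbol r,\boldsymbol{n-r-1}])$ attains its maximum at $r=4$. More precisely: if $\frac m2\equiv 0\pmod 4$, then $E(D_n^s[\boldsymbol r,\boldsymbol{m-r}])$ is strictly decreasing as $r$ runs through $4,8,\dots,\frac m2,\ \frac m2-2,\frac m2-6,\dots,2$ (in this order); if $\frac m2\equiv 2\pmod 4$, then it is strictly decreasing as $r$ runs through $4,8,\dots,\frac m2-2,\ \frac m2,\frac m2-4,\dots,2$.
   Context: A signed digraph (sidigraph) is a digraph in which every arc carries a sign $+1$ or $-1$; its adjacency matrix $A(S)=[a_{ij}]$ has $a_{ij}$ equal to the sign of the arc $w_iw_j$ if it exists and $0$ otherwise. If $\rho_1,\dots,\rho_n$ are the eigenvalues of $A(S)$, the energy of $S$ is $E(S)=\sum_{k=1}^n|\mathrm{Re}(\rho_k)|$. The sign of a directed cycle is the product of the signs of its arcs. For $k\ge 2$, $C_k$ denotes a directed cycle of length $k$ with sign $+1$ and $\boldsymbol{C}_k$ a directed cycle of length $k$ with sign $-1$. It is known that $E(C_k)=2\cot\frac{\pi}{k}$ if $k\equiv0\pmod 4$, $2\csc\frac{\pi}{k}$ if $k\equiv 2\pmod 4$, $\csc\frac{\pi}{2k}$ if $k$ is odd; and $E(\boldsymbol C_k)=2\csc\frac{\pi}{k}$ if $k\equiv0\pmod 4$, $2\cot\frac{\pi}{k}$ if $k\equiv 2\pmod 4$, $\csc\frac{\pi}{2k}$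 if $k$ is odd. For integers $p,q\ge 2$ with $p+q\le n$, $D_n^s[p,q]$, $D_n^s[\boldsymbol p,\boldsymbol q]$, $D_n^s[\boldsymbol p,q]$, $D_n^s[p,\boldsymbol q]$ denote an $n$-vertex sidigraph whose only directed cycles are two vertex-disjoint cycles of lengths $p$ and $q$ (all other vertices lying on no directed cycle), where a bold entry indicates that the cycle of that length is negative and a non-bold entry that it is positive. Its energy is the sum of the energies of its two cycles, e.g. $E(D_n^s[\boldsymbol p,\boldsymbol q])=E(\boldsymbol C_p)+E(\boldsymbol C_q)$; in particular the order of the two entries does not matter. *)

From Stdlib Require Import Reals Lra Lia Arith List Sorted.
Import ListNotations.
Open Scope R_scope.

Definition cot (x : R) : R := cos x / sin x.
Definition csc (x : R) : R := 1 / sin x.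

(* Energy E(C_k) of the NEGATIVE directed k-cycle (bold C_k), k >= 2,
   as given in the context:
   2 csc(pi/k) if k = 0 mod 4, 2 cot(pi/k) if k = 2 mod 4, csc(pi/(2k)) if k odd. *)
Definition neg_cycle_energy (k : nat) : R :=
  if Nat.eqb (k mod 4) 0 then 2 * csc (PI / INR k)
  else if Nat.eqb (k mod 4) 2 then 2 * cot (PI / INR k)
  else csc (PI / (2 * INR k)).

(* E(D_n^s[bold p, bold q]) = E(bold C_p) + E(bold C_q). *)
Definition energy_D_negneg (p q : nat) : R :=
  neg_cycle_energy p + neg_cycle_energy q.

From Stdlib Require Import Reals Lra Lia Arith List Sorted ZifyNat.
From Coquelicot Require Import Coquelicot.
Import ListNotations.
Open Scope R_scope.

(* Since m = 0 mod 4, the two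
   cycle lengths r and m - r are congruent mod 4, so the energy is
   2 (g r + g (m - r)) with g = cscpi or g = cotpi according to r mod 4.

   The analytic core: cscpi is strictly convex on (3, oo) and cotpi strictly
   concave on (3/2, oo), because their derivatives are phi(pi/x)/pi and
   psi(pi/x)/pi with phi t = t^2 cos t / sin^2 t decreasing on (0, pi/3) and
   psi t = t^2 / sin^2 t increasing on (0, 2 pi/3) (Taylor bounds on sin, cos).
   Consequently g y + g (s - y) moves monotonically as y approaches s/2:
   down for cscpi, up for cotpi.  Together with cotpi < cscpi this yields the
   comparisons between neighbours in the claimed orders (steps of 4 inside
   each residue class, and the junction at r = m/2), and the bound by the
   value at r = 4.  The orders are then assembled from a general lemma on
   local sortedness of two concatenated runs. *)

Lemma sin_taylor_bounds (t : R) :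
  0 <= t -> t <= PI -> t - t^3/6 <= sin t <= t - t^3/6 + t^5/120.
Proof.
  intros Ht0 Ht1. pose proof (sin_bound t 0 Ht0 Ht1) as B.
  unfold sin_approx, sin_term in B; simpl in B. split; lra.
Qed.

Lemma cos_taylor_bounds (t : R) :
  - PI / 2 <= t -> t <= PI / 2 -> 1 - t^2/2 <= cos t <= 1 - t^2/2 + t^4/24.
Proof.
  intros Ht0 Ht1. pose proof (cos_bound t 0 Ht0 Ht1) as B.
  unfold cos_approx, cos_term in B; simpl in B. split; lra.
Qed.

Lemma strictly_increasing_of_pos_deriv (G G' : R -> R) (lo hi : R) :
  (forall t, lo < t < hi -> derivable_pt_lim G t (G' t)) ->
  (forall t, lo < t < hi -> 0 < G' t) ->
  forall a b, lo < a -> a < b -> b < hi -> G a < G b.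
Proof.
  intros HD Hpos a b Ha Hab Hb.
  destruct (MVT_cor2 G G' a b Hab) as [c [Hmvt Hc]].
  - intros c Hc; apply HD; lra.
  - assert (0 < G' c) by (apply Hpos; lra). nra.
Qed.

(* phi (pi/x) / pi is the derivative of cscpi at x. *)
Definition phi (t : R) : R := t^2 * cos t / sin t ^ 2.

(* phi is decreasing on (0, pi/3): its derivative has the sign of
   2 sin t cos t - t (1 + cos^2 t), which the Taylor bounds make negative. *)
Lemma phi_decreasing (a b : R) : 0 < a -> a < b -> b < PI / 3 -> phi b < phi a.
Proof.
  intros Ha Hab Hb. pose proof PI2_3_2 as Hpi.
  enough (- phi a < - phi b) by lra.
  apply (strictly_increasing_of_pos_deriv (fun t => - phi t)
    (fun t => - (t * (2 * sin t * cos t - t * sin t ^ 2 - 2 * t * cos t ^ 2) / sin t ^ 3))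
    0 (PI / 3)); try lra.
  - intros t Ht. assert (0 < sin t) by (apply sin_gt_0; lra).
    apply is_derive_Reals. unfold phi. auto_derive; [nra|]. field. lra.
  - intros t Ht. assert (Hs : 0 < sin t) by (apply sin_gt_0; lra).
    destruct (sin_taylor_bounds t) as [_ Hs2]; try lra.
    destruct (cos_taylor_bounds t) as [Hc1 Hc2]; try lra.
    assert (Ht2 : 0 < t^2 < 2) by (pose proof PI_4; simpl; split; nra).
    assert (Hpoly : 2 * (t - t^3/6 + t^5/120) * (1 - t^2/2 + t^4/24) < t * (1 + (1 - t^2/2)^2)).
    {       assert (0 < t^4 * (1/90 - t^2/2880)) by (apply Rmult_lt_0_compat; [apply pow_lt|]; lra).
      assert (0 < t^3 * ((1/6 - t^2/120) + t^4 * (1/90 - t^2/2880))) by (apply Rmult_lt_0_compat; [apply pow_lt|]; lra).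
      replace (t * (1 + (1 - t^2/2)^2)) with
        (2 * (t - t^3/6 + t^5/120) * (1 - t^2/2 + t^4/24)
         + 2 * (t^3 * ((1/6 - t^2/120) + t^4 * (1/90 - t^2/2880)))) by field.
      lra. }
    assert (Hnum : 2 * sin t * cos t < t * (1 + cos t ^ 2)).
    { assert (2 * sin t * cos t <= 2 * (t - t^3/6 + t^5/120) * (1 - t^2/2 + t^4/24))
        by (apply Rmult_le_compat; lra).
      assert ((1 - t^2/2)^2 <= cos t ^ 2) by (apply pow_incr; lra). nra. }
    assert (Hneg : 2 * sin t * cos t - t * sin t ^ 2 - 2 * t * cos t ^ 2 < 0).
    { pose proof (sin2_cos2 t) as E; unfold Rsqr in E.
      replace (sin t ^ 2) with (1 - cos t ^ 2) by (simpl; lra). lra. }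
    assert (0 < / sin t ^ 3) by (apply Rinv_0_lt_compat, pow_lt; lra).
    unfold Rdiv. rewrite Ropp_mult_distr_l. apply Rmult_lt_0_compat; nra.
Qed.

(* psi (pi/x) / pi is the derivative of cotpi at x. *)
Definition psi (t : R) : R := t^2 / sin t ^ 2.

(* psi is increasing on (0, 2 pi/3): its derivative has the sign of
   sin t - t cos t, positive there. *)
Lemma psi_increasing (a b : R) : 0 < a -> a < b -> b < 2 * PI / 3 -> psi a < psi b.
Proof.
  pose proof PI2_3_2 as Hpi.
  apply (strictly_increasing_of_pos_deriv psi
    (fun t => 2 * t * (sin t - t * cos t) / sin t ^ 3) 0 (2 * PI / 3)).
  - intros t Ht. assert (0 < sin t) by (apply sin_gt_0; lra).
    apply is_derive_Reals. unfold psi. auto_derive; [nra|]. field. lra.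
  - intros t Ht. assert (Hs : 0 < sin t) by (apply sin_gt_0; lra).
    assert (Htan : t * cos t < sin t).
    { destruct (Rle_lt_dec t (PI / 2)) as [Hle | Hgt].
      - destruct (sin_taylor_bounds t) as [Hs1 _]; try lra.
        destruct (cos_taylor_bounds t) as [_ Hc2]; try lra.
        assert (Ht2 : 0 < t^2 < 8) by (pose proof PI_4; simpl; split; nra).
        assert (0 < t^3 * (1/3 - t^2/24)) by (apply Rmult_lt_0_compat; [apply pow_lt|]; lra).
        assert (t * cos t <= t * (1 - t^2/2 + t^4/24)) by (apply Rmult_le_compat_l; lra).
        replace (t - t^3/6) with (t * (1 - t^2/2 + t^4/24) + t^3 * (1/3 - t^2/24)) in Hs1 by field.
        lra.
      - assert (cos t < 0) by (apply cos_lt_0; lra). nra. }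
    assert (0 < / sin t ^ 3) by (apply Rinv_0_lt_compat, pow_lt; lra).
    unfold Rdiv. apply Rmult_lt_0_compat; nra.
Qed.

Definition cscpi (x : R) : R := csc (PI / x).
Definition cotpi (x : R) : R := cot (PI / x).

Lemma pi_over_pos (x : R) : 0 < x -> 0 < PI / x.
Proof. intros; apply Rdiv_lt_0_compat; [apply PI_RGT_0 | lra]. Qed.

Lemma pi_over_antitone (a b : R) : 0 < a -> a < b -> PI / b < PI / a.
Proof.
  intros Ha Hab. pose proof PI_RGT_0. unfold Rdiv.
  apply Rmult_lt_compat_l; [lra|]. apply Rinv_lt_contravar; nra.
Qed.

Lemma sin_pi_over_pos (x : R) : 1 < x -> 0 < sin (PI / x).
Proof.
  intros Hx. apply sin_gt_0; [apply pi_over_pos; lra|].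
  replace PI with (PI / 1) at 2 by field. apply pi_over_antitone; lra.
Qed.

Lemma cscpi_deriv (x : R) : 1 < x -> derivable_pt_lim cscpi x (phi (PI / x) / PI).
Proof.
  intros Hx. pose proof (sin_pi_over_pos x Hx). pose proof PI_RGT_0.
  apply is_derive_Reals. unfold cscpi, csc, phi. auto_derive; [lra|].
  change (PI * / x) with (PI / x). field. repeat split; lra.
Qed.

Lemma cotpi_deriv (x : R) : 1 < x -> derivable_pt_lim cotpi x (psi (PI / x) / PI).
Proof.
  intros Hx. pose proof (sin_pi_over_pos x Hx). pose proof PI_RGT_0.
  apply is_derive_Reals. unfold cotpi, cot, psi. auto_derive; [lra|].
  change (PI * / x) with (PI / x).
  pose proof (sin2_cos2 (PI / x)) as E; unfold Rsqr in E.
  transitivity ((PI / x) ^ 2 * (sin (PI / x) * sin (PI / x) + cos (PI / x) * cos (PI / x))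
                / sin (PI / x) ^ 2 / PI).
  - field. repeat split; lra.
  - rewrite E. field. split; lra.
Qed.

(* Strict convexity on (lo, oo), phrased as increasing increments:
   the increment over [x, x+d] grows with x. *)
Definition strictly_convex_from (lo : R) (G : R -> R) : Prop :=
  forall x y d, lo < x -> x < y -> 0 < d -> G (x + d) - G x < G (y + d) - G y.

(* A strictly increasing derivative gives strict convexity (mean value
   theorem applied to z |-> G (z + (y - x)) - G z). *)
Lemma convex_of_increasing_deriv (G G' : R -> R) (lo : R) :
  (forall x, lo < x -> derivable_pt_lim G x (G' x)) ->
  (forall a b, lo < a -> a < b -> G' a < G' b) ->
  strictly_convex_from lo G.
Proof.
  intros HD Hincr x y d Hx Hxy Hd.
  destruct (MVT_cor2 (fun z => G (z + (y - x)) - G z) (fun z => G' (z + (y - x)) - G' z)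
              x (x + d)) as [c [Hmvt Hc]]; [lra| |].
  - intros c Hc. apply derivable_pt_lim_minus; [|apply HD; lra].
    rewrite <- (Rmult_1_r (G' (c + (y - x)))).
    apply (derivable_pt_lim_comp (fun z => z + (y - x)) G c 1); [|apply HD; lra].
    rewrite <- (Rplus_0_r 1).
    apply derivable_pt_lim_plus; [apply derivable_pt_lim_id | apply derivable_pt_lim_const].
  - assert (G' c < G' (c + (y - x))) by (apply Hincr; lra).
    replace (x + d + (y - x)) with (y + d) in Hmvt by ring.
    replace (x + (y - x)) with y in Hmvt by ring. nra.
Qed.

(* cscpi is strictly convex on (3, oo), as phi decreases on (0, pi/3). *)
Lemma cscpi_convex : strictly_convex_from 3 cscpi.
Proof.
  apply (convex_of_increasing_deriv cscpi (fun x => phi (PI / x) / PI)).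
  - intros x Hx; apply cscpi_deriv; lra.
  - intros a b Ha Hab. pose proof PI_RGT_0.
    apply Rmult_lt_compat_r; [apply Rinv_0_lt_compat; lra|].
    apply phi_decreasing.
    + apply pi_over_pos; lra.
    + apply pi_over_antitone; lra.
    + apply pi_over_antitone; lra.
Qed.

(* cotpi is strictly concave on (3/2, oo), as psi increases on (0, 2 pi/3). *)
Lemma neg_cotpi_convex : strictly_convex_from (3 / 2) (fun x => - cotpi x).
Proof.
  apply (convex_of_increasing_deriv _ (fun x => - (psi (PI / x) / PI))).
  - intros x Hx; apply derivable_pt_lim_opp, cotpi_deriv; lra.
  - intros a b Ha Hab. pose proof PI_RGT_0. apply Ropp_lt_contravar.
    apply Rmult_lt_compat_r; [apply Rinv_0_lt_compat; lra|].
    apply psi_increasing.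
    + apply pi_over_pos; lra.
    + apply pi_over_antitone; lra.
    + replace (2 * PI / 3) with (PI / (3 / 2)) by field. apply pi_over_antitone; lra.
Qed.

Lemma pair_sum_lt (lo : R) (G : R -> R) :
  strictly_convex_from lo G ->
  forall s x y, lo < x -> x < y -> y <= s - y -> G y + G (s - y) < G x + G (s - x).
Proof.
  intros HG s x y Hx Hxy Hys.
  pose proof (HG x (s - y) (y - x) Hx ltac:(lra) ltac:(lra)) as H.
  replace (x + (y - x)) with y in H by ring.
  replace (s - y + (y - x)) with (s - x) in H by ring. lra.
Qed.

Lemma pair_sum_le (lo : R) (G : R -> R) :
  strictly_convex_from lo G ->
  forall s x y, lo < x -> x <= y -> y <= s - y -> G y + G (s - y) <= G x + G (s - x).
Proof.
  intros HG s x y Hx [Hlt | <-] Hys; [|lra].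
  left. apply (pair_sum_lt lo); assumption.
Qed.

Lemma cscpi_pair_sum_lt (s x y : R) :
  3 < x -> x < y -> y <= s - y -> cscpi y + cscpi (s - y) < cscpi x + cscpi (s - x).
Proof. apply (pair_sum_lt 3 _ cscpi_convex). Qed.

Lemma cscpi_pair_sum_le (s x y : R) :
  3 < x -> x <= y -> y <= s - y -> cscpi y + cscpi (s - y) <= cscpi x + cscpi (s - x).
Proof. apply (pair_sum_le 3 _ cscpi_convex). Qed.

Lemma cotpi_pair_sum_lt (s x y : R) :
  3 / 2 < x -> x < y -> y <= s - y -> cotpi x + cotpi (s - x) < cotpi y + cotpi (s - y).
Proof. intros Hx Hxy Hys. pose proof (pair_sum_lt _ _ neg_cotpi_convex s x y Hx Hxy Hys). lra. Qed.

Lemma cotpi_pair_sum_le (s x y : R) :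
  3 / 2 < x -> x <= y -> y <= s - y -> cotpi x + cotpi (s - x) <= cotpi y + cotpi (s - y).
Proof. intros Hx Hxy Hys. pose proof (pair_sum_le _ _ neg_cotpi_convex s x y Hx Hxy Hys). lra. Qed.

Lemma cotpi_lt_cscpi (x : R) : 2 < x -> cotpi x < cscpi x.
Proof.
  intros Hx. pose proof (sin_pi_over_pos x ltac:(lra)) as Hs. pose proof PI_RGT_0.
  assert (Hc : cos (PI / x) < 1).
  { rewrite <- cos_0. apply cos_decreasing_1; try lra.
    - left; apply pi_over_pos; lra.
    - replace PI with (PI / 1) at 2 by field. left; apply pi_over_antitone; lra.
    - apply pi_over_pos; lra. }
  unfold cotpi, cscpi, cot, csc, Rdiv.
  apply Rmult_lt_compat_r; [apply Rinv_0_lt_compat|]; lra.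
Qed.

Definition energy_split (m r : nat) : R := energy_D_negneg r (m - r).

Lemma neg_cycle_energy_0mod4 (k : nat) :
  (k mod 4 = 0)%nat -> neg_cycle_energy k = 2 * cscpi (INR k).
Proof. intros Hk. unfold neg_cycle_energy. rewrite Hk. reflexivity. Qed.

Lemma neg_cycle_energy_2mod4 (k : nat) :
  (k mod 4 = 2)%nat -> neg_cycle_energy k = 2 * cotpi (INR k).
Proof. intros Hk. unfold neg_cycle_energy. rewrite Hk. reflexivity. Qed.

(* With m = 0 mod 4 both cycle lengths fall in the same residue class. *)
Lemma energy_split_0mod4 (m r : nat) :
  (m mod 4 = 0)%nat -> (r mod 4 = 0)%nat -> (r <= m)%nat ->
  energy_split m r = 2 * (cscpi (INR r) + cscpi (INR m - INR r)).
Proof.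
  intros Hm Hr Hrm. unfold energy_split, energy_D_negneg.
  rewrite (neg_cycle_energy_0mod4 r), (neg_cycle_energy_0mod4 (m - r)), minus_INR by lia.
  ring.
Qed.

Lemma energy_split_2mod4 (m r : nat) :
  (m mod 4 = 0)%nat -> (r mod 4 = 2)%nat -> (r <= m)%nat ->
  energy_split m r = 2 * (cotpi (INR r) + cotpi (INR m - INR r)).
Proof.
  intros Hm Hr Hrm. unfold energy_split, energy_D_negneg.
  rewrite (neg_cycle_energy_2mod4 r), (neg_cycle_energy_2mod4 (m - r)), minus_INR by lia.
  ring.
Qed.

Ltac nat_ineqs_to_R :=
  repeat match goal with
         | H : (_ <= _)%nat |- _ => apply le_INR in H; rewrite ?mult_INR, ?plus_INR in H
         end;
  rewrite ?mult_INR, ?plus_INR; simpl INR in *.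

(* Within r = 0 mod 4 and below the centre, the energy decreases in steps
   of 4 (convexity of cscpi). *)
Lemma energy_step_0mod4 (m r s : nat) :
  (m mod 4 = 0)%nat -> (r mod 4 = 0)%nat -> (4 <= r)%nat -> s = (r + 4)%nat -> (2 * s <= m)%nat ->
  energy_split m r > energy_split m s.
Proof.
  intros Hm Hr Hr4 -> Hsm. rewrite !energy_split_0mod4 by lia.
  nat_ineqs_to_R. apply Rmult_gt_compat_l; [lra|].
  apply cscpi_pair_sum_lt; lra.
Qed.

(* Within r = 2 mod 4 and below the centre, the energy increases in steps
   of 4 (concavity of cotpi). *)
Lemma energy_step_2mod4 (m r s : nat) :
  (m mod 4 = 0)%nat -> (r mod 4 = 2)%nat -> (2 <= r)%nat -> s = (r + 4)%nat -> (2 * s <= m)%nat ->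
  energy_split m s > energy_split m r.
Proof.
  intros Hm Hr Hr2 -> Hsm. rewrite !energy_split_2mod4 by lia.
  nat_ineqs_to_R. apply Rmult_gt_compat_l; [lra|].
  apply cotpi_pair_sum_lt; lra.
Qed.

(* Junction when m/2 = 0 mod 4: E at m/2 exceeds E at m/2 - 2, since
   cotpi (a-2) + cotpi (a+2) <= 2 cotpi a < 2 cscpi a. *)
Lemma energy_center_0mod4 (m a b : nat) :
  m = (2 * a)%nat -> (a mod 4 = 0)%nat -> (4 <= a)%nat -> (b + 2)%nat = a ->
  energy_split m a > energy_split m b.
Proof.
  intros -> Ha Ha4 <-.
  rewrite (energy_split_0mod4 _ (b + 2)), (energy_split_2mod4 _ b) by lia.
  nat_ineqs_to_R. set (x := INR b) in *.
  assert (Hhalf : (1 + 1) * (x + (1 + 1)) - (x + (1 + 1)) = x + (1 + 1)) by ring.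
  pose proof (cotpi_pair_sum_le ((1 + 1) * (x + (1 + 1))) x (x + (1 + 1))
                ltac:(lra) ltac:(lra) ltac:(lra)) as Hcot.
  pose proof (cotpi_lt_cscpi (x + (1 + 1)) ltac:(lra)) as Hlt.
  rewrite Hhalf in Hcot |- *. lra.
Qed.

(* Junction when m/2 = 2 mod 4: E at m/2 - 2 exceeds E at m/2, since
   2 cotpi a < 2 cscpi a <= cscpi (a-2) + cscpi (a+2). *)
Lemma energy_center_2mod4 (m a b : nat) :
  m = (2 * a)%nat -> (a mod 4 = 2)%nat -> (6 <= a)%nat -> (b + 2)%nat = a ->
  energy_split m b > energy_split m a.
Proof.
  intros -> Ha Ha6 <-.
  rewrite (energy_split_0mod4 _ b), (energy_split_2mod4 _ (b + 2)) by lia.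
  nat_ineqs_to_R. set (x := INR b) in *.
  assert (Hhalf : (1 + 1) * (x + (1 + 1)) - (x + (1 + 1)) = x + (1 + 1)) by ring.
  pose proof (cscpi_pair_sum_le ((1 + 1) * (x + (1 + 1))) x (x + (1 + 1))
                ltac:(lra) ltac:(lra) ltac:(lra)) as Hcsc.
  pose proof (cotpi_lt_cscpi (x + (1 + 1)) ltac:(lra)) as Hlt.
  rewrite Hhalf in Hcsc |- *. lra.
Qed.

Lemma energy_split_symm (m r : nat) : (r <= m)%nat -> energy_split m (m - r) = energy_split m r.
Proof.
  intros Hrm. unfold energy_split, energy_D_negneg.
  replace (m - (m - r))%nat with r by lia. ring.
Qed.

(* The bound by the value at r = 4, for r <= m/2.  For r = 2 mod 4 it goes
   through the centre: cotpi r + cotpi (m-r) <= 2 cotpi (m/2)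
   < 2 cscpi (m/2) <= cscpi 4 + cscpi (m-4). *)
Lemma energy_le_at_4_lower_half (m r : nat) :
  (m mod 4 = 0)%nat -> (8 <= m)%nat -> (2 <= r)%nat -> (2 * r <= m)%nat ->
  (r mod 4 = 0 \/ r mod 4 = 2)%nat ->
  energy_split m r <= energy_split m 4.
Proof.
  intros Hm Hm8 Hr2 Hrm [Hr | Hr]; rewrite (energy_split_0mod4 m 4) by lia.
  - rewrite energy_split_0mod4 by lia.
    assert (Hr4 : (4 <= r)%nat) by lia. nat_ineqs_to_R.
    apply Rmult_le_compat_l; [lra|]. apply cscpi_pair_sum_le; lra.
  - rewrite energy_split_2mod4 by lia. nat_ineqs_to_R.
    pose proof (cotpi_pair_sum_le (INR m) (INR r) (INR m / 2)
                  ltac:(lra) ltac:(lra) ltac:(lra)) as Hcot.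
    pose proof (cotpi_lt_cscpi (INR m / 2) ltac:(lra)) as Hlt.
    pose proof (cscpi_pair_sum_le (INR m) (1 + 1 + 1 + 1) (INR m / 2)
                  ltac:(lra) ltac:(lra) ltac:(lra)) as Hcsc.
    replace (INR m - INR m / 2) with (INR m / 2) in Hcot, Hcsc by field.
    lra.
Qed.

Lemma energy_le_at_4 (m r : nat) :
  (m mod 4 = 0)%nat -> (8 <= m)%nat -> (2 <= r <= m - 2)%nat -> Nat.even r = true ->
  energy_split m r <= energy_split m 4.
Proof.
  intros Hm Hm8 Hr Heven.
  assert (Hr4 : (r mod 4 = 0 \/ r mod 4 = 2)%nat)
    by (apply Nat.even_spec in Heven as [p ->]; lia).
  destruct (Nat.le_gt_cases (2 * r) m) as [Hhalf | Hhalf].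
  - apply energy_le_at_4_lower_half; lia.
  - rewrite <- energy_split_symm by lia. apply energy_le_at_4_lower_half; lia.
Qed.

Lemma locally_sorted_map_seq {A : Type} (R : A -> A -> Prop) (g : nat -> A) (L : nat) :
  forall a, (forall i, (a <= i)%nat -> (S i < a + L)%nat -> R (g i) (g (S i))) ->
  LocallySorted R (map g (seq a L)).
Proof.
  induction L as [|L IH]; intros a Hstep; [constructor|].
  destruct L as [|L]; simpl; [constructor|].
  apply LSorted_consn.
  - apply (IH (S a)). intros i Hi HiL. apply Hstep; lia.
  - apply Hstep; lia.
Qed.

Lemma locally_sorted_app {A : Type} (R : A -> A -> Prop) (l1 l2 : list A) (a b : A) :
  LocallySorted R (l1 ++ [a]) -> R a b -> LocallySorted R (b :: l2) ->
  LocallySorted R (l1 ++ a :: b :: l2).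
Proof.
  intros H1 Hab H2. induction l1 as [|x l1 IH]; simpl in *.
  - apply LSorted_consn; assumption.
  - destruct l1 as [|y l1]; simpl in *; inversion H1; subst.
    + apply LSorted_consn; [apply LSorted_consn|]; assumption.
    + apply LSorted_consn; [apply IH|]; assumption.
Qed.

Lemma locally_sorted_two_runs {A : Type} (R : A -> A -> Prop) (u v : nat -> A) (K L : nat) :
  (forall i, (i < K)%nat -> R (u i) (u (S i))) ->
  R (u K) (v 0%nat) ->
  (forall j, (j < L)%nat -> R (v j) (v (S j))) ->
  LocallySorted R (map u (seq 0 (S K)) ++ map v (seq 0 (S L))).
Proof.
  intros Hu Huv Hv.
  assert (Hsu : LocallySorted R (map u (seq 0 (S K))))
    by (apply locally_sorted_map_seq; intros; apply Hu; lia).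
  assert (Hsv : LocallySorted R (map v (seq 0 (S L))))
    by (apply locally_sorted_map_seq; intros; apply Hv; lia).
  rewrite seq_S, map_app in Hsu |- *. simpl in Hsu, Hsv |- *.
  rewrite <- app_assoc. apply locally_sorted_app; assumption.
Qed.

Lemma energy_descent_mod8_0 (m : nat) :
  (m mod 8 = 0)%nat -> (8 <= m)%nat ->
  LocallySorted (fun a b => energy_split m a > energy_split m b)
    (map (fun j => 4 * (j + 1))%nat (seq 0 (m / 8)) ++
     map (fun j => m / 2 - 2 - 4 * j)%nat (seq 0 (m / 8))).
Proof.
  intros Hm Hm8. replace (m / 8)%nat with (S (m / 8 - 1)) by lia.
  apply locally_sorted_two_runs.
  - intros i Hi. apply energy_step_0mod4; lia.
  - apply energy_center_0mod4; lia.
  - intros j Hj. apply energy_step_2mod4; lia.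
Qed.

Lemma energy_descent_mod8_4 (m : nat) :
  (m mod 8 = 4)%nat -> (12 <= m)%nat ->
  LocallySorted (fun a b => energy_split m a > energy_split m b)
    (map (fun j => 4 * (j + 1))%nat (seq 0 (m / 8)) ++
     map (fun j => m / 2 - 4 * j)%nat (seq 0 (m / 8 + 1))).
Proof.
  intros Hm Hm12. replace (m / 8)%nat with (S (m / 8 - 1)) by lia.
  replace (S (m / 8 - 1) + 1)%nat with (S (m / 8)) by lia.
  apply locally_sorted_two_runs.
  - intros i Hi. apply energy_step_0mod4; lia.
  - apply energy_center_2mod4; lia.
  - intros j Hj. apply energy_step_2mod4; lia.
Qed.

Theorem lemma3p10 (n : nat) :
  (5 < n)%nat -> (n mod 4 = 1)%nat ->
  let m := (n - 1)%nat in
  let f := fun r : nat => energy_D_negneg r (m - r) in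
  (* maximum at r = 4 over even r in [2, n-3] *)
  (forall r : nat, (2 <= r <= n - 3)%nat -> Nat.even r = true -> f r <= f 4%nat) /\
  (* case m/2 = 0 mod 4 : order 4,8,...,m/2, m/2-2, m/2-6, ..., 2 *)
  (((m / 2) mod 4 = 0)%nat ->
     LocallySorted (fun a b => f a > f b)
       (map (fun j => 4 * (j + 1))%nat (seq 0 (m / 8)) ++
        map (fun j => m / 2 - 2 - 4 * j)%nat (seq 0 (m / 8)))) /\
  (* case m/2 = 2 mod 4 : order 4,8,...,m/2-2, m/2, m/2-4, ..., 2 *)
  (((m / 2) mod 4 = 2)%nat ->
     LocallySorted (fun a b => f a > f b)
       (map (fun j => 4 * (j + 1))%nat (seq 0 (m / 8)) ++
        map (fun j => m / 2 - 4 * j)%nat (seq 0 (m / 8 + 1)))).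
Proof.
  intros Hn Hn4 m f.
  assert (Hm : m = (n - 1)%nat) by reflexivity.
  assert (Hm4 : (m mod 4 = 0)%nat) by lia.
  change f with (energy_split m). clearbody m. clear f.
  split; [|split].
  - intros r Hr Heven. apply energy_le_at_4; [assumption | lia.. | assumption].
  - intros Hhalf. apply energy_descent_mod8_0; lia.
  - intros Hhalf. apply energy_descent_mod8_4; lia.
Qed.
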